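(* Let $G$ be a locally compact second countable group with two essentially chief series $(A_i)_{i=0}^m$ and $(B_j)_{j=0}^n$. Let $I=\{i\in\{1,\dots,m\}\mid A_i/A_{i-1}$ is a non-negligible chief factor of $G\}$ and $J=\{j\in\{1,\dots,n\}\mid B_j/B_{j-1}$ is a non-negligible chief factor of $G\}$. Then there is a bijection $f:I\to J$, where $f(i)$ is the unique element $j\in J$ such that $A_i/A_{i-1}$ is associated to $B_j/B_{j-1}$.
   Context: A normal factor of $G$ is $K/L$ with $L<K$ closed normal subgroups of $G$; it is a chief factor if no closed normal subgroup of $G$ lies strictly between $L$ and $K$. An essentially chief series for $G$ is a finite series $\{1\}=G_0\le\dots\le G_n=G$ of closed normal subgroups with each $G_{i+1}/G_i$ compact, discrete, or a chief factor of $G$. Normal factors $K_1/L_1$ and $K_2/L_2$ are associated if $\overline{K_1L_2}=\overline{K_2L_1}$ and $K_i\cap\overline{L_1L_2}=L_i$ for $i=1,2$. A chief factor $K/L$ is negligible if it is abelian or associated to a compact or discrete chief factor of $G$. *)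

From Stdlib Require Import List Arith.

Set Implicit Arguments.

Record TopGroup := {
  carrier :> Type;
  gmul : carrier -> carrier -> carrier;
  ginv : carrier -> carrier;
  gone : carrier;
  gmulA : forall x y z, gmul x (gmul y z) = gmul (gmul x y) z;
  gmul1 : forall x, gmul gone x = x;
  gmulV : forall x, gmul (ginv x) x = gone;
  is_open : (carrier -> Prop) -> Prop;
  open_full : is_open (fun _ => True);
  open_inter : forall U V, is_open U -> is_open V -> is_open (fun x => U x /\ V x);
  open_union : forall F : (carrier -> Prop) -> Prop,
      (forall U, F U -> is_open U) -> is_open (fun x => exists U, F U /\ U x);
  mul_cont : forall U x y, is_open U -> U (gmul x y) ->
      exists V W, is_open V /\ is_open W /\ V x /\ W y /\
        (forall a b, V a -> W b -> U (gmul a b));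
  inv_cont : forall U, is_open U -> is_open (fun x => U (ginv x))
}.

Section Defs.
Variable G : TopGroup.

Definition gset := G -> Prop.

Definition subset (A B : gset) : Prop := forall x, A x -> B x.
Definition seteq (A B : gset) : Prop := forall x, A x <-> B x.
Definition setI (A B : gset) : gset := fun x => A x /\ B x.
Definition setmul (A B : gset) : gset :=
  fun x => exists a b, A a /\ B b /\ x = gmul G a b.
Definition trivial_set : gset := fun x => x = gone G.
Definition full_set : gset := fun _ => True.

Definition closed (A : gset) : Prop := is_open G (fun x => ~ A x).
Definition closure (A : gset) : gset :=
  fun x => forall C, closed C -> subset A C -> C x.

Definition compact (A : gset) : Prop :=
  forall F : gset -> Prop, (forall U, F U -> is_open G U) ->
    (forall x, A x -> exists U, F U /\ U x) ->
    exists l : list gset, (forall U, In U l -> F U) /\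
      (forall x, A x -> exists U, In U l /\ U x).

Definition hausdorff : Prop :=
  forall x y, x <> y -> exists U V, is_open G U /\ is_open G V /\ U x /\ V y /\
    (forall z, ~ (U z /\ V z)).

Definition locally_compact : Prop :=
  forall x, exists U C, is_open G U /\ U x /\ subset U C /\ compact C.

Definition second_countable : Prop :=
  exists b : nat -> gset, (forall n, is_open G (b n)) /\
    (forall U x, is_open G U -> U x -> exists n, b n x /\ subset (b n) U).

(** locally compact second countable group (Hausdorff, by convention) *)
Definition lcsc : Prop := hausdorff /\ locally_compact /\ second_countable.

Definition subgroup (H : gset) : Prop :=
  H (gone G) /\ (forall x y, H x -> H y -> H (gmul G x y)) /\
  (forall x, H x -> H (ginv G x)).

Definition normal (H : gset) : Prop :=
  subgroup H /\ forall g h, H h -> H (gmul G (ginv G g) (gmul G h g)).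

Definition closed_normal (H : gset) : Prop := normal H /\ closed H.

Definition normal_factor (K L : gset) : Prop :=
  closed_normal K /\ closed_normal L /\ subset L K /\ ~ subset K L.

(** K/L is compact in the quotient topology (for L <= K).  Open sets of K/L
    are images of sets U /\ K with U open in G; this unfolds to: *)
Definition factor_compact (K L : gset) : Prop :=
  forall F : gset -> Prop, (forall U, F U -> is_open G U) ->
    (forall x, K x -> exists U, F U /\ U x) ->
    exists l : list gset, (forall U, In U l -> F U) /\
      (forall x, K x -> exists U, In U l /\ setmul U L x).

(** K/L is discrete: L is open in K (relative topology). *)
Definition factor_discrete (K L : gset) : Prop :=
  exists U, is_open G U /\ forall x, K x -> (U x <-> L x).

Definition factor_abelian (K L : gset) : Prop :=
  forall a b, K a -> K b ->
    L (gmul G (ginv G a) (gmul G (ginv G b) (gmul G a b))).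

Definition chief_factor (K L : gset) : Prop :=
  normal_factor K L /\
  forall N, closed_normal N -> subset L N -> subset N K -> seteq N L \/ seteq N K.

Definition associated (K1 L1 K2 L2 : gset) : Prop :=
  seteq (closure (setmul K1 L2)) (closure (setmul K2 L1)) /\
  seteq (setI K1 (closure (setmul L1 L2))) L1 /\
  seteq (setI K2 (closure (setmul L1 L2))) L2.

Definition negligible (K L : gset) : Prop :=
  chief_factor K L /\
  (factor_abelian K L \/
   exists K' L', chief_factor K' L' /\
     (factor_compact K' L' \/ factor_discrete K' L') /\
     associated K L K' L').

Definition ess_chief_series (A : nat -> gset) (m : nat) : Prop :=
  seteq (A 0) trivial_set /\ seteq (A m) full_set /\
  (forall i, i <= m -> closed_normal (A i)) /\
  (forall i, i < m -> subset (A i) (A (S i))) /\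
  (forall i, i < m ->
     factor_compact (A (S i)) (A i) \/ factor_discrete (A (S i)) (A i) \/
     chief_factor (A (S i)) (A i)).

Definition nn_index (A : nat -> gset) (m i : nat) : Prop :=
  1 <= i /\ i <= m /\ chief_factor (A i) (A (i - 1)) /\
  ~ negligible (A i) (A (i - 1)).

End Defs.

(* For a non-abelian chief factor K/L let C(K/L) = {g | [g, K] <= L} be its
   centraliser.  Associated chief factors have the same centraliser, and
   conversely a non-abelian chief factor K'/L' with L' <= C(K/L) but K' not
   contained in C(K/L) is associated to K/L.  Given any essentially chief series
   (B_j), let j be the first index with B_j not inside C(K/L).  The closed
   normal subgroups Y = B_j ∩ C(K/L) and X generated by Y and [B_j, K] satisfy
   B_(j-1) <= Y < X <= B_j, and X/Y is a chief factor associated to K/L.  If K/L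
   is non-negligible, B_j/B_(j-1) can be neither compact nor discrete (X/Y would
   inherit this), so it is a chief factor, X/Y = B_j/B_(j-1), and it is again
   non-negligible.  Hence i |-> the first index at which (B_j) leaves
   C(A_i/A_(i-1)) is the required bijection. *)

From Stdlib Require Import List Arith Lia Classical FunctionalExtensionality
  PropExtensionality ClassicalEpsilon.

Set Implicit Arguments.

Section ChiefSeries.
Variable G : TopGroup.

Local Notation "x ⋅ y" := (gmul G x y) (at level 40, left associativity).
Local Notation "x ⁻¹" := (ginv G x) (at level 2, format "x ⁻¹").

Lemma set_ext (A B : gset G) : (forall x, A x <-> B x) -> A = B.
Proof.
  intro AB; apply functional_extensionality; intro x.
  apply propositional_extensionality; auto.
Qed.

Lemma mulgV (x : G) : x ⋅ x⁻¹ = gone G.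
Proof.
  rewrite <- (gmul1 G (x ⋅ x⁻¹)), <- (gmulV G x⁻¹) at 1.
  rewrite <- gmulA, (gmulA G x⁻¹ x), gmulV, gmul1.
  apply gmulV.
Qed.

Lemma mulg1 (x : G) : x ⋅ gone G = x.
Proof. rewrite <- (gmulV G x), gmulA, mulgV, gmul1; reflexivity. Qed.

Lemma mulgAr (x y z : G) : x ⋅ y ⋅ z = x ⋅ (y ⋅ z).
Proof. symmetry; apply gmulA. Qed.

Lemma mulKg (x y : G) : x⁻¹ ⋅ (x ⋅ y) = y.
Proof. rewrite gmulA, gmulV, gmul1; reflexivity. Qed.

Lemma mulKVg (x y : G) : x ⋅ (x⁻¹ ⋅ y) = y.
Proof. rewrite gmulA, mulgV, gmul1; reflexivity. Qed.

Lemma invg_unique (x y : G) : x ⋅ y = gone G -> y = x⁻¹.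
Proof. intro xy; rewrite <- (mulKg x y), xy, mulg1; reflexivity. Qed.

Lemma invgK (x : G) : x⁻¹⁻¹ = x.
Proof. symmetry; apply invg_unique, gmulV. Qed.

Lemma invMg (x y : G) : (x ⋅ y)⁻¹ = y⁻¹ ⋅ x⁻¹.
Proof.
  symmetry; apply invg_unique.
  rewrite mulgAr, mulKVg; apply mulgV.
Qed.

Lemma invg1 : (gone G)⁻¹ = gone G.
Proof. symmetry; apply invg_unique, gmul1. Qed.

Hint Rewrite mulgAr gmul1 gmulV mulgV mulg1 mulKg mulKVg invgK invMg invg1 : grp.

Ltac gsimpl := autorewrite with grp; try reflexivity.

Definition commg (a b : G) : G := a⁻¹ ⋅ (b⁻¹ ⋅ (a ⋅ b)).

Lemma commgMr (a n l : G) : commg a (n ⋅ l) = commg a l ⋅ (l⁻¹ ⋅ (commg a n ⋅ l)).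
Proof. unfold commg; gsimpl. Qed.

Definition continuous (f : G -> G) : Prop :=
  forall U, is_open G U -> is_open G (fun x => U (f x)).

Lemma open_of_local (P : gset G) :
  (forall x, P x -> exists W, is_open G W /\ W x /\ subset W P) -> is_open G P.
Proof.
  intro loc.
  replace P with (fun x => exists U, (is_open G U /\ subset U P) /\ U x).
  - apply open_union; intros U [oU _]; exact oU.
  - apply set_ext; intro x; split.
    + intros [U [[_ UP] Ux]]; apply UP, Ux.
    + intro Px; destruct (loc x Px) as [W [oW [Wx WP]]]; exists W; auto.
Qed.

Lemma continuous_id : continuous (fun x => x).
Proof. intros U oU; exact oU. Qed.

Lemma continuous_const (c : G) : continuous (fun _ => c).
Proof.
  intros U _; apply open_of_local; intros x Uc.
  exists (fun _ => True); split; [apply open_full | split; auto].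
  intros y _; exact Uc.
Qed.

Lemma continuous_mul (f g : G -> G) :
  continuous f -> continuous g -> continuous (fun x => f x ⋅ g x).
Proof.
  intros cf cg U oU; apply open_of_local; intros x Ux.
  destruct (mul_cont G U (f x) (g x) oU Ux) as [V [W [oV [oW [Vx [Wx VW]]]]]].
  exists (fun y => V (f y) /\ W (g y)); split.
  - apply (open_inter G (fun y => V (f y)) (fun y => W (g y))); auto.
  - split; auto; intros y [Vy Wy]; apply VW; auto.
Qed.

Lemma continuous_inv (f : G -> G) : continuous f -> continuous (fun x => (f x)⁻¹).
Proof. intros cf U oU; apply (cf (fun y => U y⁻¹)), inv_cont, oU. Qed.

Lemma continuous_commg_l (k : G) : continuous (fun g => commg g k).
Proof.
  unfold commg.
  apply continuous_mul; [apply continuous_inv, continuous_id |].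
  apply continuous_mul; [apply continuous_const |].
  apply continuous_mul; [apply continuous_id | apply continuous_const].
Qed.

Lemma continuous_commg_r (g : G) : continuous (fun k => commg g k).
Proof.
  unfold commg.
  apply continuous_mul; [apply continuous_const |].
  apply continuous_mul; [apply continuous_inv, continuous_id |].
  apply continuous_mul; [apply continuous_const | apply continuous_id].
Qed.

Lemma closed_forall (I : Type) (P : I -> Prop) (S : I -> gset G) :
  (forall i, P i -> closed (S i)) -> closed (fun x => forall i, P i -> S i x).
Proof.
  intro cS; unfold closed.
  replace (fun x => ~ (forall i, P i -> S i x)) with
    (fun x => exists U, (exists i, P i /\ U = (fun y => ~ S i y)) /\ U x).
  - apply open_union; intros U [i [Pi ->]]; apply cS, Pi.
  - apply set_ext; intro x; split.
    + intros [U [[i [Pi ->]] Ux]] all; apply Ux, all, Pi.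
    + intro notall; apply not_all_ex_not in notall; destruct notall as [i notSi].
      apply imply_to_and in notSi; destruct notSi as [Pi notSi].
      exists (fun y => ~ S i y); eauto.
Qed.

Lemma closed_setI (A B : gset G) : closed A -> closed B -> closed (setI A B).
Proof.
  intros cA cB.
  replace (setI A B) with (fun x => forall b : bool, True -> (if b then A else B) x).
  - apply closed_forall; intros [|] _; auto.
  - apply set_ext; intro x; unfold setI; split.
    + intro AB; split; [apply (AB true I) | apply (AB false I)].
    + intros [Ax Bx] [|] _; auto.
Qed.

Lemma closed_preimage (f : G -> G) (D : gset G) :
  continuous f -> closed D -> closed (fun x => D (f x)).
Proof. intros cf cD; apply (cf (fun y => ~ D y)), cD. Qed.

Lemma closure_closed (A : gset G) : closed (closure A).
Proof.
  replace (closure A) with (fun x => forall C, closed C /\ subset A C -> C x).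
  - apply (@closed_forall (gset G) (fun C => closed C /\ subset A C) (fun C => C)).
    intros C [cC _]; exact cC.
  - apply set_ext; intro x; unfold closure; split; intros clx C.
    + intros cC AC; apply clx; auto.
    + intros [cC AC]; apply clx; auto.
Qed.

Lemma subset_closure (A : gset G) : subset A (closure A).
Proof. intros x Ax C _ AC; apply AC, Ax. Qed.

Lemma closure_min (A C : gset G) : closed C -> subset A C -> subset (closure A) C.
Proof. intros cC AC x clx; apply clx; auto. Qed.

Lemma closure_preimage (f : G -> G) (S D : gset G) :
  continuous f -> closed D -> (forall x, S x -> D (f x)) ->
  forall x, closure S x -> D (f x).
Proof.
  intros cf cD SD; apply (@closure_min S (fun y => D (f y))); auto.
  apply closed_preimage; auto.
Qed.

Lemma subgroup1 (H : gset G) : subgroup H -> H (gone G).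
Proof. intros [h _]; exact h. Qed.

Lemma subgroupM (H : gset G) x y : subgroup H -> H x -> H y -> H (x ⋅ y).
Proof. intros [_ [h _]]; apply h. Qed.

Lemma subgroupV (H : gset G) x : subgroup H -> H x -> H x⁻¹.
Proof. intros [_ [_ h]]; apply h. Qed.

Lemma normal_subgroup (H : gset G) : normal H -> subgroup H.
Proof. intros [h _]; exact h. Qed.

Lemma normalJ (H : gset G) g h : normal H -> H h -> H (g⁻¹ ⋅ (h ⋅ g)).
Proof. intros [_ c]; apply c. Qed.

Lemma normalJV (H : gset G) g h : normal H -> H h -> H (g ⋅ (h ⋅ g⁻¹)).
Proof. intros nH Hh; rewrite <- (invgK g) at 1; apply normalJ; auto. Qed.

Lemma cn_normal (H : gset G) : closed_normal H -> normal H.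
Proof. intros [h _]; exact h. Qed.

Lemma cn_subgroup (H : gset G) : closed_normal H -> subgroup H.
Proof. intros [[h _] _]; exact h. Qed.

Lemma cn_closed (H : gset G) : closed_normal H -> closed H.
Proof. intros [_ h]; exact h. Qed.

Local Hint Resolve normal_subgroup cn_normal cn_subgroup cn_closed : core.

Lemma closure_normal (H : gset G) : normal H -> closed_normal (closure H).
Proof.
  intro nH; split; [| apply closure_closed].
  split; [split; [| split] |].
  - apply subset_closure, subgroup1; auto.
  - intros x y clx cly.
    assert (left_in : forall a, H a -> closure H (a ⋅ y)).
    { intros a Ha.
      apply (closure_preimage (f := fun z => a ⋅ z) (S := H)); auto using closure_closed.
      - apply continuous_mul; [apply continuous_const | apply continuous_id].
      - intros z Hz; apply subset_closure, subgroupM; auto. }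
    apply (closure_preimage (f := fun z => z ⋅ y) (S := H)); auto using closure_closed.
    apply continuous_mul; [apply continuous_id | apply continuous_const].
  - intros x clx.
    apply (closure_preimage (f := fun z => z⁻¹) (S := H)); auto using closure_closed.
    + apply continuous_inv, continuous_id.
    + intros z Hz; apply subset_closure, subgroupV; auto.
  - intros g h clh.
    apply (closure_preimage (f := fun z => g⁻¹ ⋅ (z ⋅ g)) (S := H));
      auto using closure_closed.
    + apply continuous_mul; [apply continuous_const |].
      apply continuous_mul; [apply continuous_id | apply continuous_const].
    + intros z Hz; apply subset_closure, normalJ; auto.
Qed.

Lemma setmul_normal (X Y : gset G) : normal X -> normal Y -> normal (setmul X Y).
Proof.
  intros nX nY; split; [split; [| split] |].
  - exists (gone G), (gone G); repeat split; [apply subgroup1; auto .. | gsimpl].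
  - intros a b [x [y [Xx [Yy ->]]]] [x' [y' [Xx' [Yy' ->]]]].
    exists (x ⋅ x'), (x'⁻¹ ⋅ (y ⋅ x') ⋅ y'); repeat split.
    + apply subgroupM; auto.
    + apply subgroupM; auto; apply normalJ; auto.
    + gsimpl.
  - intros a [x [y [Xx [Yy ->]]]].
    exists x⁻¹, (x ⋅ (y⁻¹ ⋅ x⁻¹)); repeat split.
    + apply subgroupV; auto.
    + apply normalJV, subgroupV; auto.
    + gsimpl.
  - intros g a [x [y [Xx [Yy ->]]]].
    exists (g⁻¹ ⋅ (x ⋅ g)), (g⁻¹ ⋅ (y ⋅ g)).
    repeat split; [apply normalJ; auto .. | gsimpl].
Qed.

Lemma setmulC (X Y : gset G) : normal X -> setmul X Y = setmul Y X.
Proof.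
  intro nX; apply set_ext; intro a; split.
  - intros [x [y [Xx [Yy ->]]]].
    exists y, (y⁻¹ ⋅ (x ⋅ y)); repeat split; auto; [apply normalJ; auto | gsimpl].
  - intros [y [x [Yy [Xx ->]]]].
    exists (y ⋅ (x ⋅ y⁻¹)), y; repeat split; auto; [apply normalJV; auto | gsimpl].
Qed.

Lemma setmul_min (X Y C : gset G) :
  subgroup C -> subset X C -> subset Y C -> subset (setmul X Y) C.
Proof. intros sC XC YC a [x [y [Xx [Yy ->]]]]; apply subgroupM; auto. Qed.

Lemma subset_setmul_l (X Y : gset G) : subgroup Y -> subset X (setmul X Y).
Proof.
  intros sY x Xx; exists x, (gone G); repeat split; auto; [apply subgroup1; auto | gsimpl].
Qed.

Lemma subset_setmul_r (X Y : gset G) : subgroup X -> subset Y (setmul X Y).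
Proof.
  intros sX y Yy; exists (gone G), y; repeat split; auto; [apply subgroup1; auto | gsimpl].
Qed.

Lemma cn_closure_setmul (X Y : gset G) :
  closed_normal X -> closed_normal Y -> closed_normal (closure (setmul X Y)).
Proof. intros cX cY; apply closure_normal, setmul_normal; auto. Qed.

Lemma cn_setI (X Y : gset G) :
  closed_normal X -> closed_normal Y -> closed_normal (setI X Y).
Proof.
  intros cX cY; split; [| apply closed_setI; auto].
  split; [split; [| split] |]; unfold setI.
  - split; apply subgroup1; auto.
  - intros x y [] []; split; apply subgroupM; auto.
  - intros x []; split; apply subgroupV; auto.
  - intros g h []; split; apply normalJ; auto.
Qed.

Definition cn_gen (S : gset G) : gset G :=
  fun x => forall N, closed_normal N /\ subset S N -> N x.

Lemma cn_gen_cn (S : gset G) : closed_normal (cn_gen S).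
Proof.
  split.
  - split; [split; [| split] |]; unfold cn_gen.
    + intros N [cN _]; apply subgroup1; auto.
    + intros x y Nx Ny N NS; apply subgroupM; [apply NS | apply Nx, NS | apply Ny, NS].
    + intros x Nx N NS; apply subgroupV; [apply NS | apply Nx, NS].
    + intros g h Nh N NS; apply normalJ; [apply NS | apply Nh, NS].
  - apply (@closed_forall (gset G) (fun N => closed_normal N /\ subset S N) (fun N => N)).
    intros N [cN _]; auto.
Qed.

Lemma subset_cn_gen (S : gset G) : subset S (cn_gen S).
Proof. intros x Sx N [_ SN]; apply SN, Sx. Qed.

Lemma cn_gen_min (S N : gset G) : closed_normal N -> subset S N -> subset (cn_gen S) N.
Proof. intros cN SN x genx; apply genx; auto. Qed.

Lemma chief_cn (K L : gset G) : chief_factor K L -> closed_normal K /\ closed_normal L.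
Proof. intros [[cK [cL _]] _]; split; auto. Qed.

Lemma chief_factor_eq (K L N : gset G) : chief_factor K L -> closed_normal N ->
  subset L N -> subset N K -> N = L \/ N = K.
Proof.
  intros [_ chief] cN LN NK.
  destruct (chief N cN LN NK) as [E | E]; [left | right]; apply set_ext; auto.
Qed.

(** * The centraliser of a factor *)

Definition centraliser (K L : gset G) : gset G := fun g => forall k, K k -> L (commg g k).

Lemma commg_mem_l (K : gset G) a k : normal K -> K a -> K (commg a k).
Proof.
  intros nK Ka; unfold commg.
  apply subgroupM; auto; [apply subgroupV | apply normalJ]; auto.
Qed.

Lemma commg_mem_r (K : gset G) a k : normal K -> K k -> K (commg a k).
Proof.
  intros nK Kk.
  replace (commg a k) with (a⁻¹ ⋅ (k⁻¹ ⋅ a) ⋅ k) by (unfold commg; gsimpl).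
  apply subgroupM; auto; apply normalJ, subgroupV; auto.
Qed.

Lemma centraliser_cn (K L : gset G) :
  normal K -> closed_normal L -> closed_normal (centraliser K L).
Proof.
  intros nK cL; split.
  - split; [split; [| split] |]; unfold centraliser.
    + intros k _; unfold commg; gsimpl; apply subgroup1; auto.
    + intros x y Cx Cy k Kk.
      replace (commg (x ⋅ y) k) with (y⁻¹ ⋅ (commg x k ⋅ y) ⋅ commg y k)
        by (unfold commg; gsimpl).
      apply subgroupM; auto; apply normalJ; auto.
    + intros x Cx k Kk.
      replace (commg x⁻¹ k) with (x ⋅ ((commg x k)⁻¹ ⋅ x⁻¹)) by (unfold commg; gsimpl).
      apply normalJV, subgroupV; auto.
    + intros g c Cc k Kk.
      replace (commg (g⁻¹ ⋅ (c ⋅ g)) k) with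
        (g⁻¹ ⋅ (commg c (g ⋅ (k ⋅ g⁻¹)) ⋅ g)) by (unfold commg; gsimpl).
      apply normalJ; auto; apply Cc, normalJV; auto.
  - apply (closed_forall K (fun k g => L (commg g k))); intros k _.
    apply closed_preimage; auto using continuous_commg_l.
Qed.

Lemma subset_centraliser (K L : gset G) : normal L -> subset L (centraliser K L).
Proof. intros nL l Ll k _; apply commg_mem_l; auto. Qed.

Lemma factor_abelianE (K L : gset G) : factor_abelian K L <-> subset K (centraliser K L).
Proof.
  split; [intros ab a Ka k Kk; apply ab; auto | intros ab a b Ka Kb; apply (ab a Ka b Kb)].
Qed.

Lemma not_subset_centraliser (K L N : gset G) :
  ~ subset N (centraliser K L) -> exists n k, N n /\ K k /\ ~ L (commg n k).
Proof.
  intro NC; apply NNPP; intro none; apply NC; intros n Nn k Kk.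
  apply NNPP; intro notL; apply none; exists n, k; auto.
Qed.

Lemma chief_centraliser (K L : gset G) : chief_factor K L -> ~ factor_abelian K L ->
  subset (setI K (centraliser K L)) L.
Proof.
  intros chiefKL nab; pose proof chiefKL as [[cK [cL [LK _]]] _].
  destruct (chief_factor_eq chiefKL (N := setI K (centraliser K L))) as [E | E].
  - apply cn_setI, centraliser_cn; auto.
  - intros x Lx; split; [apply LK, Lx | apply subset_centraliser; auto].
  - intros x []; auto.
  - rewrite E; intros x Lx; exact Lx.
  - exfalso; apply nab, factor_abelianE; intros a Ka.
    rewrite <- E in Ka; apply Ka.
Qed.

(** * The chief factor cut out of a normal factor by a centraliser *)

Section Exit.
Variables K L : gset G.
Hypothesis chiefKL : chief_factor K L.
Hypothesis nabKL : ~ factor_abelian K L.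

Local Notation C := (centraliser K L).

Let cK : closed_normal K. Proof. apply chiefKL. Qed.
Let cL : closed_normal L. Proof. apply chiefKL. Qed.
Let LK : subset L K. Proof. apply chiefKL. Qed.
Let cC : closed_normal C. Proof. apply centraliser_cn; auto. Qed.
Let LC : subset L C. Proof. apply subset_centraliser; auto. Qed.
Let KCL : subset (setI K C) L. Proof. apply chief_centraliser; auto. Qed.

Lemma closure_setmul_cover (N : gset G) :
  closed_normal N -> ~ subset N C -> subset K (closure (setmul N L)).
Proof.
  intros cN NC; destruct (not_subset_centraliser NC) as [n [k [Nn [Kk notL]]]].
  destruct (chief_factor_eq chiefKL (N := setI K (closure (setmul N L)))) as [E | E].
  - apply cn_setI, cn_closure_setmul; auto.
  - intros x Lx; split; [apply LK, Lx | apply subset_closure, subset_setmul_r; auto].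
  - intros x []; auto.
  - exfalso; apply notL; rewrite <- E; split.
    + apply commg_mem_r; auto.
    + apply subset_closure, subset_setmul_l, commg_mem_l; auto.
  - intros x Kx; rewrite <- E in Kx; apply Kx.
Qed.

Lemma commg_mem_of_cover (N : gset G) a :
  closed_normal N -> subset K (closure (setmul N L)) ->
  (forall l, L l -> N (commg a l)) -> forall k, K k -> N (commg a k).
Proof.
  intros cN cover NaL k Kk.
  apply (closure_preimage (f := fun z => commg a z) (S := setmul N L));
    auto using continuous_commg_r.
  intros z [n [l [Nn [Ll ->]]]]; rewrite commgMr.
  apply subgroupM; auto; apply normalJ, commg_mem_r; auto.
Qed.

Variables A B : gset G.
Hypothesis cA : closed_normal A.
Hypothesis BA : subset B A.
Hypothesis BC : subset B C.
Hypothesis AC : ~ subset A C.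

Definition exit_bottom : gset G := setI A C.

Definition exit_top : gset G :=
  cn_gen (fun x => (exists a k, A a /\ K k /\ x = commg a k) \/ exit_bottom x).

Lemma cn_exit_bottom : closed_normal exit_bottom.
Proof. apply cn_setI; auto. Qed.

Lemma cn_exit_top : closed_normal exit_top.
Proof. apply cn_gen_cn. Qed.

Local Hint Resolve cn_exit_bottom cn_exit_top : core.

Lemma subset_exit_bottom : subset B exit_bottom.
Proof. intros x Bx; split; auto. Qed.

Lemma exit_bottom_top : subset exit_bottom exit_top.
Proof. intros y Yy; apply subset_cn_gen; right; exact Yy. Qed.

Lemma exit_top_sub : subset exit_top A.
Proof.
  apply cn_gen_min; auto.
  intros x [[a [k [Aa [Kk ->]]]] | [Ax _]]; [apply commg_mem_l |]; auto.
Qed.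

Lemma exit_top_not_central : ~ subset exit_top C.
Proof.
  destruct (not_subset_centraliser AC) as [a [k [Aa [Kk notL]]]].
  intro topC; apply notL, KCL; split; [apply commg_mem_r; auto |].
  apply topC, subset_cn_gen; left; eauto.
Qed.

Lemma exit_chief : chief_factor exit_top exit_bottom.
Proof.
  split.
  - split; [exact cn_exit_top | split; [exact cn_exit_bottom | split; [exact exit_bottom_top |]]].
    intro topY; apply exit_top_not_central; intros x Tx; apply topY, Tx.
  - intros N cN YN NX.
    destruct (classic (subset N C)) as [NC | NC]; [left | right]; intro x; split; auto.
    + intro Nx; split; [apply exit_top_sub, NX, Nx | apply NC, Nx].
    + revert x; apply cn_gen_min; auto.
      intros x [[a [k [Aa [Kk ->]]]] | Yx]; [| apply YN, Yx].
      apply (commg_mem_of_cover (N := N)); auto using closure_setmul_cover.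
      intros l Ll; apply YN; split; [apply commg_mem_l | apply LC, commg_mem_r]; auto.
Qed.

Lemma exit_associated : associated K L exit_top exit_bottom.
Proof.
  assert (KXL : subset K (closure (setmul exit_top L)))
    by (apply closure_setmul_cover; auto using exit_top_not_central).
  assert (LYC : subset (closure (setmul L exit_bottom)) C).
  { apply closure_min; auto; apply setmul_min; auto; intros y [_ Cy]; exact Cy. }
  assert (cKY : closed_normal (closure (setmul K exit_bottom)))
    by (apply cn_closure_setmul; auto).
  assert (cXL : closed_normal (closure (setmul exit_top L)))
    by (apply cn_closure_setmul; auto).
  split; [| split]; intro x; split.
  - revert x; apply closure_min; auto.
    apply setmul_min; auto.
    intros y Yy; apply subset_closure, subset_setmul_l, exit_bottom_top; auto.
  - revert x; apply closure_min; auto.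
    apply setmul_min; auto.
    + apply cn_gen_min; auto.
      intros y [[a [k [Aa [Kk ->]]]] | Yy].
      * apply subset_closure, subset_setmul_l, commg_mem_r; auto.
      * apply subset_closure, subset_setmul_r; auto.
    + intros y Ly; apply subset_closure, subset_setmul_l, LK; auto.
  - intros [Kx clx]; apply KCL; split; [exact Kx | apply LYC, clx].
  - intro Lx; split; [apply LK, Lx | apply subset_closure, subset_setmul_l; auto].
  - intros [Tx clx]; split; [apply exit_top_sub, Tx | apply LYC, clx].
  - intro Yx; split; [apply exit_bottom_top, Yx | apply subset_closure, subset_setmul_r; auto].
Qed.

Lemma exit_chief_eq : chief_factor A B -> exit_top = A /\ exit_bottom = B.
Proof.
  intro chiefAB.
  assert (EY : exit_bottom = B).
  { destruct (chief_factor_eq chiefAB (N := exit_bottom)) as [E | E]; auto.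
    - exact subset_exit_bottom.
    - intros x []; auto.
    - exfalso; apply AC; rewrite <- E; intros x []; auto. }
  split; [| exact EY].
  destruct (chief_factor_eq chiefAB (N := exit_top)) as [E | E]; auto.
  - rewrite <- EY; exact exit_bottom_top.
  - exact exit_top_sub.
  - exfalso; apply (proj1 exit_chief); rewrite E, EY; intros x Bx; exact Bx.
Qed.

End Exit.

Lemma exists_sublist_in (F : gset G -> Prop) (l' : list (gset G)) :
  exists l, (forall U, In U l -> F U) /\ (forall U, In U l' -> F U -> In U l).
Proof.
  induction l' as [| V l' [l [lF l'l]]].
  - exists nil; split; intros U [].
  - destruct (classic (F V)) as [FV | FV].
    + exists (V :: l); split.
      * intros U [<- | inU]; auto.
      * intros U [<- | inU] FU; [left | right]; auto.
    + exists l; split; auto; intros U [<- | inU] FU; [contradiction | auto].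
Qed.

Lemma factor_compact_sub (A B X Y : gset G) :
  closed_normal X -> closed_normal Y ->
  subset B Y -> subset Y X -> subset X A -> factor_compact A B -> factor_compact X Y.
Proof.
  intros cX cY BY YX XA compAB F openF cover.
  destruct (compAB (fun U => F U \/ U = (fun x => ~ X x))) as [l' [l'F cover']].
  - intros U [FU | ->]; [apply openF, FU | apply cn_closed, cX].
  - intros x Ax; destruct (classic (X x)) as [Xx | Xx].
    + destruct (cover x Xx) as [U [FU Ux]]; exists U; auto.
    + exists (fun x => ~ X x); auto.
  - destruct (exists_sublist_in F l') as [l [lF l'l]].
    exists l; split; auto.
    intros x Xx; destruct (cover' x (XA x Xx)) as [U [inU [u [b [Uu [Bb ->]]]]]].
    destruct (l'F U inU) as [FU | ->].
    + exists U; split; auto; exists u, b; auto.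
    + exfalso; apply Uu.
      replace u with (u ⋅ b ⋅ b⁻¹) by gsimpl.
      apply subgroupM, subgroupV; auto.
Qed.

Lemma factor_discrete_sub (A B X Y : gset G) :
  subgroup B -> closed_normal X -> closed_normal Y ->
  subset B Y -> subset Y X -> subset X A -> factor_discrete A B -> factor_discrete X Y.
Proof.
  intros sB cX cY BY YX XA [U [oU UB]].
  exists (fun x => exists U', (exists y, Y y /\ U' = (fun z => U (y⁻¹ ⋅ z))) /\ U' x).
  split.
  - apply open_union; intros U' [y [Yy ->]].
    apply (continuous_mul (f := fun _ => y⁻¹) (g := fun z => z));
      [apply continuous_const | apply continuous_id | exact oU].
  - intros x Xx; split.
    + intros [U' [[y [Yy ->]] Uyx]].
      apply UB in Uyx; [| apply XA, subgroupM, Xx; auto; apply subgroupV; auto].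
      replace x with (y ⋅ (y⁻¹ ⋅ x)) by gsimpl.
      apply subgroupM; auto.
    + intro Yx; exists (fun z => U (x⁻¹ ⋅ z)); split; [exists x; auto |].
      simpl; rewrite gmulV; apply UB; [apply XA, subgroup1 | apply subgroup1]; auto.
Qed.

(** * Associated factors *)

Lemma associated_sym (K1 L1 K2 L2 : gset G) :
  closed_normal L1 -> associated K1 L1 K2 L2 -> associated K2 L2 K1 L1.
Proof.
  intros cL1 [E1 [E2 E3]]; unfold associated.
  rewrite (@setmulC L1 L2) in E2, E3 by auto.
  split; [intro x; symmetry; apply E1 | split; assumption].
Qed.

Lemma centraliser_sub_associated (K1 L1 K2 L2 : gset G) :
  closed_normal K1 -> closed_normal L1 -> closed_normal K2 -> closed_normal L2 ->
  associated K1 L1 K2 L2 -> subset (centraliser K1 L1) (centraliser K2 L2).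
Proof.
  intros cK1 cL1 cK2 cL2 [E1 [_ E3]] g Cg k K2k.
  apply (proj1 (E3 _)); split; [apply commg_mem_r; auto |].
  assert (clk : closure (setmul K1 L2) k).
  { apply (proj2 (E1 _)), subset_closure, subset_setmul_l; auto. }
  apply (closure_preimage (f := fun z => commg g z) (S := setmul K1 L2));
    auto using continuous_commg_r, closure_closed.
  intros z [k1 [l2 [K1k1 [L2l2 ->]]]].
  apply subset_closure; rewrite commgMr, (@setmulC L1 L2) by auto.
  exists (commg g l2), (l2⁻¹ ⋅ (commg g k1 ⋅ l2)); repeat split.
  - apply commg_mem_r; auto.
  - apply normalJ, Cg; auto.
Qed.

Lemma centraliser_associated (K1 L1 K2 L2 : gset G) :
  closed_normal K1 -> closed_normal L1 -> closed_normal K2 -> closed_normal L2 ->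
  associated K1 L1 K2 L2 -> centraliser K1 L1 = centraliser K2 L2.
Proof.
  intros cK1 cL1 cK2 cL2 assoc; apply set_ext; intro x; split;
    apply centraliser_sub_associated; auto using associated_sym.
Qed.

Lemma associated_nonabelian (K1 L1 K2 L2 : gset G) :
  closed_normal K1 -> closed_normal L1 -> closed_normal K2 -> closed_normal L2 ->
  associated K1 L1 K2 L2 -> ~ factor_abelian K1 L1 -> ~ factor_abelian K2 L2.
Proof.
  intros cK1 cL1 cK2 cL2 assoc nab ab; apply nab, factor_abelianE.
  rewrite factor_abelianE, <- (centraliser_associated cK1 cL1 cK2 cL2 assoc) in ab.
  assert (cC : closed_normal (centraliser K1 L1)) by (apply centraliser_cn; auto).
  intros k K1k; apply (@closure_min (setmul K2 L1)); auto.
  - apply setmul_min; auto; apply subset_centraliser; auto.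
  - apply (proj1 (proj1 assoc _)), subset_closure, subset_setmul_l; auto.
Qed.

Lemma associated_of_exit (K L K' L' : gset G) :
  chief_factor K L -> ~ factor_abelian K L -> chief_factor K' L' ->
  subset L' (centraliser K L) -> ~ subset K' (centraliser K L) ->
  associated K L K' L'.
Proof.
  intros chiefKL nab chief' L'C K'C; pose proof chief' as [[cK' [cL' [L'K' _]]] _].
  destruct (exit_chief_eq chiefKL nab cK' L'K' L'C K'C chief') as [ET EB].
  rewrite <- ET, <- EB at 1; apply exit_associated; auto.
Qed.

Lemma associated_iff_centraliser (K L K' L' : gset G) :
  chief_factor K L -> ~ factor_abelian K L -> chief_factor K' L' -> ~ factor_abelian K' L' ->
  associated K L K' L' <-> centraliser K L = centraliser K' L'.
Proof.
  intros chiefKL nab chief' nab'.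
  destruct (chief_cn chiefKL) as [cK cL]; destruct (chief_cn chief') as [cK' cL'].
  split; [apply centraliser_associated; auto |].
  intro E; apply associated_of_exit; rewrite ?E; auto.
  - apply subset_centraliser; auto.
  - rewrite <- factor_abelianE; exact nab'.
Qed.

Lemma negligible_associated (K L K' L' : gset G) :
  chief_factor K L -> ~ factor_abelian K L -> chief_factor K' L' ->
  associated K L K' L' -> negligible K' L' -> negligible K L.
Proof.
  intros chiefKL nab chief' assoc [_ neg'].
  destruct (chief_cn chiefKL) as [cK cL]; destruct (chief_cn chief') as [cK' cL'].
  assert (nab' : ~ factor_abelian K' L') by (apply (associated_nonabelian cK cL); auto).
  destruct neg' as [ab' | [K'' [L'' [chief'' [small assoc']]]]]; [contradiction |].
  destruct (chief_cn chief'') as [cK'' cL''].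
  assert (nab'' : ~ factor_abelian K'' L'') by (apply (associated_nonabelian cK' cL'); auto).
  split; [exact chiefKL | right; exists K'', L''; split; [exact chief'' | split; [exact small |]]].
  apply associated_iff_centraliser; auto.
  rewrite (centraliser_associated cK cL cK' cL' assoc).
  apply centraliser_associated; auto.
Qed.

(** * Essentially chief series *)

Definition is_exit (A : nat -> gset G) (m : nat) (C : gset G) (j : nat) : Prop :=
  1 <= j <= m /\ subset (A (j - 1)) C /\ ~ subset (A j) C.

Definition exit_index (A : nat -> gset G) (m : nat) (C : gset G) : nat :=
  epsilon (inhabits 0) (is_exit A m C).

Definition factor_centraliser (A : nat -> gset G) (i : nat) : gset G :=
  centraliser (A i) (A (i - 1)).

Lemma series_cn (A : nat -> gset G) m i :
  ess_chief_series A m -> i <= m -> closed_normal (A i).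
Proof. intros [_ [_ [cA _]]]; apply cA. Qed.

Lemma series_mono (A : nat -> gset G) m a b :
  ess_chief_series A m -> a <= b -> b <= m -> subset (A a) (A b).
Proof.
  intros [_ [_ [_ [step _]]]] ab; induction ab as [| b ab IH]; intros bm x Ax; auto.
  apply step; [lia | apply IH; [lia | exact Ax]].
Qed.

Lemma series_factor (A : nat -> gset G) m j : ess_chief_series A m -> 1 <= j <= m ->
  factor_compact (A j) (A (j - 1)) \/ factor_discrete (A j) (A (j - 1)) \/
  chief_factor (A j) (A (j - 1)).
Proof.
  intros [_ [_ [_ [_ factors]]]] jm.
  replace j with (S (j - 1)) at 1 3 5 by lia; apply factors; lia.
Qed.

Lemma is_exit_exists (A : nat -> gset G) m C :
  subset (A 0) C -> ~ subset (A m) C -> exists j, is_exit A m C j.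
Proof.
  intros A0C AmC.
  enough (H : forall k, ~ subset (A k) C ->
             exists j, 1 <= j <= k /\ subset (A (j - 1)) C /\ ~ subset (A j) C).
  { destruct (H m AmC) as [j [jm rest]]; exists j; split; [lia | exact rest]. }
  induction k as [| k IH]; intro AkC; [contradiction |].
  destruct (classic (subset (A k) C)) as [kC | kC].
  - exists (S k); replace (S k - 1) with k by lia; split; [lia | auto].
  - destruct (IH kC) as [j [jk rest]]; exists j; split; [lia | exact rest].
Qed.

Lemma is_exit_unique (A : nat -> gset G) m C j j' :
  ess_chief_series A m -> is_exit A m C j -> is_exit A m C j' -> j = j'.
Proof.
  intros sA [jm [jC njC]] [jm' [jC' njC']].
  destruct (Nat.lt_trichotomy j j') as [lt | [eq | lt]]; auto; exfalso.
  - apply njC; intros x Ax; apply jC', (series_mono (a := j) sA); auto; lia.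
  - apply njC'; intros x Ax; apply jC, (series_mono (a := j') sA); auto; lia.
Qed.

Lemma exit_indexP (A : nat -> gset G) m C :
  subset (A 0) C -> ~ subset (A m) C -> is_exit A m C (exit_index A m C).
Proof. intros A0C AmC; unfold exit_index; apply epsilon_spec, is_exit_exists; auto. Qed.

Lemma exit_indexE (A : nat -> gset G) m C j :
  ess_chief_series A m -> is_exit A m C j -> exit_index A m C = j.
Proof.
  intros sA jexit.
  assert (chosen : is_exit A m C (exit_index A m C))
    by (unfold exit_index; apply epsilon_spec; exists j; exact jexit).
  apply (is_exit_unique sA chosen jexit).
Qed.

Lemma nn_index_chief (A : nat -> gset G) m i : nn_index A m i ->
  chief_factor (A i) (A (i - 1)) /\ ~ factor_abelian (A i) (A (i - 1)).
Proof. intros [_ [_ [chief nneg]]]; split; auto; intro ab; apply nneg; split; auto. Qed.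

Lemma associated_iff_factor_centraliser (A B : nat -> gset G) m n i j :
  nn_index A m i -> nn_index B n j ->
  associated (A i) (A (i - 1)) (B j) (B (j - 1)) <->
  factor_centraliser A i = factor_centraliser B j.
Proof.
  intros nni nnj; destruct (nn_index_chief nni), (nn_index_chief nnj).
  apply associated_iff_centraliser; auto.
Qed.

Lemma exit_index_self (A : nat -> gset G) m i :
  ess_chief_series A m -> nn_index A m i -> exit_index A m (factor_centraliser A i) = i.
Proof.
  intros sA nni; pose proof nni as [i1 [im _]].
  destruct (nn_index_chief nni) as [chief nab]; destruct (chief_cn chief) as [_ cL].
  apply exit_indexE; auto; unfold factor_centraliser; split; [lia | split].
  - apply subset_centraliser; auto.
  - rewrite <- factor_abelianE; exact nab.
Qed.

Lemma exit_index_series (B : nat -> gset G) n (K L : gset G) :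
  ess_chief_series B n -> chief_factor K L -> ~ factor_abelian K L ->
  is_exit B n (centraliser K L) (exit_index B n (centraliser K L)).
Proof.
  intros [B0 [Bn _]] chiefKL nab; destruct (chief_cn chiefKL) as [cK cL].
  assert (cC : closed_normal (centraliser K L)) by (apply centraliser_cn; auto).
  apply exit_indexP.
  - intros x B0x; apply B0 in B0x; rewrite B0x; apply subgroup1; auto.
  - intro BnC; apply nab, factor_abelianE; intros x _; apply BnC, Bn; exact I.
Qed.

Lemma exit_factor_associated (B : nat -> gset G) n (K L : gset G) j :
  ess_chief_series B n -> chief_factor K L -> ~ negligible K L ->
  is_exit B n (centraliser K L) j ->
  chief_factor (B j) (B (j - 1)) /\ associated K L (B j) (B (j - 1)).
Proof.
  intros sB chiefKL nneg [jn [BC nBC]].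
  assert (nab : ~ factor_abelian K L) by (intro ab; apply nneg; split; auto).
  assert (cBj : closed_normal (B j)) by (apply (series_cn sB); lia).
  assert (cBj' : closed_normal (B (j - 1))) by (apply (series_cn sB); lia).
  assert (BB : subset (B (j - 1)) (B j)) by (apply (series_mono sB); lia).
  pose proof (exit_chief chiefKL nab cBj nBC) as chiefXY.
  pose proof (exit_associated chiefKL nab cBj nBC) as assocXY.
  set (X := exit_top K L (B j)) in *; set (Y := exit_bottom K L (B j)) in *.
  destruct (chief_cn chiefXY) as [cX cY].
  assert (BY : subset (B (j - 1)) Y) by (apply subset_exit_bottom; auto).
  assert (YX : subset Y X) by apply exit_bottom_top.
  assert (XB : subset X (B j)) by (apply exit_top_sub; auto).
  assert (large : ~ (factor_compact X Y \/ factor_discrete X Y)).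
  { intro small; apply nneg; split; [exact chiefKL | right; eauto]. }
  destruct (series_factor sB jn) as [comp | [disc | chiefB]].
  - exfalso; apply large; left; apply (factor_compact_sub cX cY BY YX XB comp).
  - exfalso; apply large; right.
    apply (factor_discrete_sub (cn_subgroup cBj') cX cY BY YX XB disc).
  - destruct (exit_chief_eq chiefKL nab cBj BB BC nBC chiefB) as [ET EB].
    split; [exact chiefB |].
    rewrite <- ET, <- EB at 1; exact assocXY.
Qed.

Lemma exit_index_nn (A B : nat -> gset G) m n i :
  ess_chief_series B n -> nn_index A m i ->
  nn_index B n (exit_index B n (factor_centraliser A i)) /\
  factor_centraliser B (exit_index B n (factor_centraliser A i)) = factor_centraliser A i.
Proof.
  intros sB nni; pose proof nni as [_ [_ [chiefA nneg]]]; unfold factor_centraliser.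
  destruct (nn_index_chief nni) as [_ nab].
  pose proof (exit_index_series sB chiefA nab) as exit.
  destruct (exit_factor_associated sB chiefA nneg exit) as [chiefB assoc].
  destruct exit as [jn _]; destruct (chief_cn chiefA), (chief_cn chiefB).
  split; [split; [lia | split; [lia | split; [exact chiefB |]]] |].
  - intro negB; apply nneg, (negligible_associated chiefA nab chiefB assoc negB).
  - symmetry; apply centraliser_associated; auto.
Qed.

End ChiefSeries.

Theorem mainTheorem13 (G : TopGroup) (A B : nat -> gset G) (m n : nat) :
  lcsc G -> ess_chief_series A m -> ess_chief_series B n ->
  exists f : nat -> nat,
    (forall i, nn_index A m i -> nn_index B n (f i)) /\
    (forall i i', nn_index A m i -> nn_index A m i' -> f i = f i' -> i = i') /\
    (forall j, nn_index B n j -> exists i, nn_index A m i /\ f i = j) /\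
    (forall i j, nn_index A m i -> nn_index B n j ->
       (associated (A i) (A (i - 1)) (B j) (B (j - 1)) <-> j = f i)).
Proof.
  intros _ sA sB.
  exists (fun i => exit_index B n (factor_centraliser A i)).
  split; [| split; [| split]].
  - intros i nni; apply (exit_index_nn sB nni).
  - intros i i' nni nni' E.
    destruct (exit_index_nn sB nni) as [_ Ei], (exit_index_nn sB nni') as [_ Ei'].
    rewrite <- (exit_index_self sA nni), <- (exit_index_self sA nni').
    f_equal; congruence.
  - intros j nnj; destruct (exit_index_nn sA nnj) as [nni Ei].
    eexists; split; [exact nni |].
    rewrite Ei; apply (exit_index_self sB nnj).
  - intros i j nni nnj; rewrite (associated_iff_factor_centraliser nni nnj); split.
    + intros ->; symmetry; apply (exit_index_self sB nnj).
    + intros ->; symmetry; apply (exit_index_nn sB nni).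
Qed.
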